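(* For every integer $m\ge 3$, $M(3,m)=2(m-1)$.
   Context: All graphs are finite and simple. A path $v_1,\ldots,v_r$ in a graph $G$ is degree-monotone if $\deg_G(v_1)\le\cdots\le\deg_G(v_r)$; its order is $r$. Let $mp(G)$ be the maximum order of a degree-monotone path in $G$. For a $2$-edge-coloring of $K_n$ with colors $1,2$, let $G_j$ be the spanning subgraph consisting of the edges colored $j$ (degrees taken in $G_j$). $M(m_1,m_2)$ is the minimum integer $M$ such that for every $n\ge M$ and every $2$-edge-coloring of $K_n$, either $mp(G_1)\ge m_1$ or $mp(G_2)\ge m_2$. *)

From mathcomp Require Import all_boot all_order.
Set Implicit Arguments. Unset Strict Implicit. Unset Printing Implicit Defensive.

(* A simple graph on vertex set 'I_n is given by a symmetric irreflexive
   relation e : rel 'I_n. *)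

Definition gdeg (n : nat) (e : rel 'I_n) (v : 'I_n) : nat := #|[set u | e v u]|.

Definition dm_path (n : nat) (e : rel 'I_n) (s : seq 'I_n) : bool :=
  [&& uniq s,
      (if s is x :: s' then path e x s' else true)
    & sorted leq (map (gdeg e) s)].

(* mp(G): the maximum order of a degree-monotone path in G (paths have at
   most n vertices). *)
Definition mp (n : nat) (e : rel 'I_n) : nat :=
  \max_(k < n.+1 | [exists t : (val k).-tuple 'I_n, dm_path e t]) val k.

(* A 2-edge-colouring of K_n is a symmetric c : 'I_n -> 'I_n -> bool
   (colour 1 = true, colour 2 = false; the diagonal is irrelevant).
   G_j is the spanning subgraph of edges of colour j. *)
Definition colour_graph (n : nat) (c : 'I_n -> 'I_n -> bool) (b : bool) : rel 'I_n :=
  fun u v => (u != v) && (c u v == b).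

Definition ramsey_mp_prop (m1 m2 M : nat) : Prop :=
  forall n : nat, M <= n ->
  forall c : 'I_n -> 'I_n -> bool, (forall u v, c u v = c v u) ->
    m1 <= mp (colour_graph c true) \/ m2 <= mp (colour_graph c false).

Definition is_M (m1 m2 M : nat) : Prop :=
  ramsey_mp_prop m1 m2 M /\ forall M', ramsey_mp_prop m1 m2 M' -> M <= M'.

From mathcomp Require Import all_boot all_order zify.
Set Implicit Arguments. Unset Strict Implicit. Unset Printing Implicit Defensive.

(* Lower bound: on 2m - 3 vertices, let colour 1 be the complete bipartite
   graph K_{m-2,m-1}; its paths on three vertices alternate sides, so their
   degrees read d, d', d with d <> d', and colour 2 is K_{m-2} + K_{m-1}.

   Upper bound: order the vertices by G1-degree, ties broken by index, and
   let the level of v be the order of a longest G2-path descending from v.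
   If G2 has no degree-monotone path on m vertices, levels lie in 1..m-1 and
   two vertices of equal level are G1-adjacent; as G1 is triangle free,
   every level consists of exactly two G1-adjacent partners once
   n >= 2(m - 1).  Induction on the level shows that every G1-degree is 1,
   so G2 is regular, and a longest descending path from a top-level vertex
   followed by its partner is a degree-monotone G2-path on m vertices. *)

Section Longest.
Variable n : nat.
Implicit Types (P : pred (seq 'I_n)) (s : seq 'I_n).

Definition longest P : nat :=
  \max_(k < n.+1 | [exists t : (val k).-tuple 'I_n, P t]) val k.

Lemma size_uniq_ord s : uniq s -> size s <= n.
Proof. by move/card_uniqP <-; rewrite -[n in _ <= n]card_ord max_card. Qed.

Lemma leq_longest P s : P s -> uniq s -> size s <= longest P.
Proof.
move=> Ps /size_uniq_ord; rewrite -ltnS => lt_s_n.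
apply: (@leq_bigmax_cond _ _ (fun k : 'I_n.+1 => val k) (Ordinal lt_s_n)).
by apply/existsP; exists (in_tuple s).
Qed.

Lemma longest_leP P b : (forall s, P s -> size s <= b) -> longest P <= b.
Proof.
by move=> le_b; apply/bigmax_leqP => k /existsP [t /le_b]; rewrite size_tuple.
Qed.

Lemma longest_witness P s0 : P s0 -> uniq s0 ->
  exists2 s, P s & size s = longest P.
Proof.
move=> Ps0 /size_uniq_ord; rewrite -ltnS => lt_s0_n.
pose Q := fun k : 'I_n.+1 => [exists t : (val k).-tuple 'I_n, P t].
have nonempty_Q : 0 < #|Q|.
  by apply/card_gt0P; exists (Ordinal lt_s0_n); apply/existsP; exists (in_tuple s0).
rewrite /longest.
have [k /existsP[t Pt] ->] := eq_bigmax_cond (fun k : 'I_n.+1 => val k) nonempty_Q.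
by exists t; rewrite ?size_tuple.
Qed.
End Longest.

(* [mp e] unfolds to [longest (dm_path e)]. *)
Lemma dm_path_leq_mp (n : nat) (e : rel 'I_n) (s : seq 'I_n) :
  dm_path e s -> size s <= mp e.
Proof. by move=> dm_s; apply: leq_longest (dm_s) _; case/and3P: dm_s. Qed.

Lemma mp_leP (n : nat) (e : rel 'I_n) (b : nat) :
  (forall s, dm_path e s -> size s <= b) -> mp e <= b.
Proof. exact: longest_leP. Qed.

Section CutColouring.
Variables (n : nat) (A : {set 'I_n}).

Definition cut_colouring (u v : 'I_n) : bool := (u \in A) != (v \in A).

Lemma cut_colouring_sym u v : cut_colouring u v = cut_colouring v u.
Proof. by rewrite /cut_colouring eq_sym. Qed.

Local Notation H1 := (colour_graph cut_colouring true).
Local Notation H2 := (colour_graph cut_colouring false).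

Lemma gdeg_cut v : gdeg H1 v = if v \in A then #|~: A| else #|A|.
Proof.
rewrite /gdeg; suff -> : [set u | H1 v u] = if v \in A then ~: A else A.
  by case: (v \in A).
apply/setP => u; rewrite inE /colour_graph /cut_colouring.
have [<-|_] /= := eqVneq v u; case vA: (v \in A); rewrite ?in_setC ?vA //.
by case: (u \in A).
Qed.

Lemma mp_cut_true : #|A| != #|~: A| -> mp H1 <= 2.
Proof.
move=> unbalanced; apply: mp_leP => -[|x [|y [|z s]]] //.
case/and3P=> /= _ /and3P[/andP[_ /eqP + /andP[_ /eqP + _]]].
rewrite !gdeg_cut /cut_colouring => xy yz /and3P[le_xy le_yz _].
move: unbalanced xy yz le_xy le_yz.
by case: (x \in A) (y \in A) (z \in A) => [] [] [] //= + _ _ a b; rewrite eqn_leq a b.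
Qed.

Lemma path_cut_false x s :
  path H2 x s -> all (fun y => (y \in A) == (x \in A)) s.
Proof.
elim: s x => [|y s IH] x //= /andP[/andP[_ /eqP]]; rewrite /cut_colouring.
by move=> /negbFE/eqP same /IH; rewrite same eqxx.
Qed.

Lemma mp_cut_false : mp H2 <= maxn #|A| #|~: A|.
Proof.
apply: mp_leP => -[|x s] // /and3P[uniq_s /path_cut_false /allP same _].
pose side := if x \in A then A else ~: A.
have sub : {subset x :: s <= side}.
  move=> y; rewrite inE /side => /predU1P[->|/same/eqP same_y];
  by case: ifP => xA; rewrite ?in_setC ?same_y xA.
have /subset_leq_card le_side : x :: s \subset side by apply/subsetP.
rewrite -(card_uniqP uniq_s); apply: leq_trans le_side _.
by rewrite /side; case: ifP; rewrite ?leq_maxl ?leq_maxr.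
Qed.

End CutColouring.

Lemma cut_colouring_mp_bounds (a b : nat) : a != b ->
  exists c : 'I_(a + b) -> 'I_(a + b) -> bool, [/\ forall u v, c u v = c v u,
    mp (colour_graph c true) <= 2 & mp (colour_graph c false) <= maxn a b].
Proof.
move=> neq_ab; pose A := [set lshift b i | i : 'I_a].
have cardA : #|A| = a by rewrite card_imset ?card_ord //; apply: lshift_inj.
have cardAC : #|~: A| = b by move: (cardsC A); rewrite card_ord cardA => /addnI.
exists (cut_colouring A); split.
- exact: cut_colouring_sym.
- by apply: mp_cut_true; rewrite cardA cardAC.
- by have := mp_cut_false A; rewrite cardA cardAC.
Qed.

Lemma card_fibers_eq (T : finType) (k b : nat) (f : T -> 'I_k) :
  (forall j, #|[set x | f x == j]| <= b) -> b * k <= #|T| ->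
  forall j, #|[set x | f x == j]| = b.
Proof.
move=> le_b le_T j.
have sum_T : #|T| = \sum_(i < k) #|[set x | f x == i]|.
  rewrite -sum1_card (partition_big f predT) //=.
  by apply: eq_bigr => i _; rewrite sum1dep_card.
have le_rest : \sum_(i < k | i != j) #|[set x | f x == i]| <= b * k.-1.
  apply: leq_trans (_ : \sum_(i < k | i != j) b <= _); first exact: leq_sum.
  by rewrite sum_nat_const cardC1 card_ord mulnC.
have k_gt0 : 0 < k := leq_ltn_trans (leq0n j) (ltn_ord j).
apply/eqP; rewrite eqn_leq le_b -(leq_add2r (b * k.-1)) addnC -mulnSr prednK //.
by apply: leq_trans le_T _; rewrite sum_T (bigD1 j) //= leq_add2l.
Qed.

Section UpperBound.
Variables (n m : nat) (c : 'I_n -> 'I_n -> bool).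
Hypothesis c_sym : forall u v, c u v = c v u.
Local Notation G1 := (colour_graph c true).
Local Notation G2 := (colour_graph c false).
Local Notation d1 := (gdeg G1).
Local Notation d2 := (gdeg G2).

Lemma colour_graph_sym b x y : colour_graph c b x y = colour_graph c b y x.
Proof. by rewrite /colour_graph eq_sym c_sym. Qed.

Lemma colour_graph_neq b x y : colour_graph c b x y -> x != y.
Proof. by case/andP. Qed.

Lemma colour_graph_trueN x y : x != y -> G1 x y = ~~ G2 x y.
Proof. by rewrite /colour_graph => ->; case: (c x y). Qed.

Lemma gdeg_colourD v : d1 v + d2 v = n.-1.
Proof.
rewrite /gdeg -cardsUI.
have -> : [set u | G1 v u] :&: [set u | G2 v u] = set0.
  by apply/setP => u; rewrite !inE /colour_graph; case: (v != u); case: (c v u).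
have -> : [set u | G1 v u] :|: [set u | G2 v u] = [set~ v].
  by apply/setP => u; rewrite !inE /colour_graph eq_sym; case: (u != v); case: (c v u).
by rewrite cards0 addn0 cardsC1 card_ord.
Qed.

Hypothesis mp_G1_lt3 : mp G1 < 3.

Lemma G1_no_dm3 x y z :
  G1 x y -> G1 y z -> x != z -> d1 x <= d1 y -> d1 y <= d1 z -> False.
Proof.
move=> xy yz xz le_xy le_yz.
have : dm_path G1 [:: x; y; z].
  rewrite /dm_path /= xy yz le_xy le_yz !inE !negb_or xz.
  by rewrite (colour_graph_neq xy) (colour_graph_neq yz).
by move/dm_path_leq_mp/leq_ltn_trans/(_ mp_G1_lt3).
Qed.

Lemma G1_triangle_free x y z : G1 x y -> G1 y z -> G1 z x -> False.
Proof.
wlog le_xy : x y z / d1 x <= d1 y.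
  move=> W xy yz zx; have [le_xy|/ltnW le_yx] := leqP (d1 x) (d1 y).
    exact: W le_xy xy yz zx.
  by apply: (W y x z le_yx); rewrite colour_graph_sym.
move=> xy yz zx; have [le_yz|lt_zy] := leqP (d1 y) (d1 z).
  by apply: (G1_no_dm3 xy yz) => //; rewrite eq_sym (colour_graph_neq zx).
have [le_xz|lt_zx] := leqP (d1 x) (d1 z).
  apply: (G1_no_dm3 _ _ (colour_graph_neq xy) le_xz (ltnW lt_zy));
  by rewrite colour_graph_sym.
apply: (G1_no_dm3 zx xy _ (ltnW lt_zx) le_xy).
by rewrite eq_sym (colour_graph_neq yz).
Qed.

Lemma G1_eq_gdeg x y : G1 x y -> d1 x = d1 y -> d1 y <= 1.
Proof.
move=> xy eq_xy; rewrite leqNgt; apply/negP => d1y_gt1.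
have := cardsD1 x [set u | G1 y u]; rewrite inE colour_graph_sym xy => card_y.
have /card_gt0P[z] : 0 < #|[set u | G1 y u] :\ x|.
  by move: d1y_gt1; rewrite /gdeg card_y.
rewrite !inE => /andP[zx yz].
have [le_yz|lt_zy] := leqP (d1 y) (d1 z).
  by apply: (G1_no_dm3 xy yz _ (eq_leq eq_xy) le_yz); rewrite eq_sym.
by apply: (G1_no_dm3 _ _ zx (ltnW lt_zy)); rewrite ?eq_xy // colour_graph_sym.
Qed.

(* Being injective and monotone in d1, key turns key-increasing G1-paths and
   key-decreasing G2-paths into degree-monotone ones (d1 + d2 = n - 1). *)
Definition key (v : 'I_n) : nat := d1 v * n + v.

Lemma key_inj : injective key.
Proof.
move=> x y /(congr1 (modn^~ n)); rewrite /key /= !modnMDl !modn_small //.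
exact: val_inj.
Qed.

Lemma gdeg_key x y : key x < key y -> d1 x <= d1 y.
Proof.
rewrite /key => lt_key; rewrite leqNgt; apply/negP => lt_d1.
have := ltn_ord x; have := ltn_ord y; move: lt_key lt_d1.
move: (d1 x) (d1 y) (val x) (val y) => a b p q; nia.
Qed.

Lemma G1_no_key_path x y z :
  G1 x y -> G1 y z -> key x < key y -> key y < key z -> False.
Proof.
move=> xy yz lt_xy lt_yz; apply: (G1_no_dm3 xy yz) (gdeg_key lt_xy) (gdeg_key lt_yz).
by apply: contraTneq (ltn_trans lt_xy lt_yz) => ->; rewrite ltnn.
Qed.

Hypothesis mp_G2_ltm : mp G2 < m.

Definition key_descent (s : seq 'I_n) : bool :=
  sorted (fun x y => (key y < key x) && G2 x y) s.

Lemma key_descent_uniq s : key_descent s -> uniq s.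
Proof.
move=> desc_s; apply: (@sorted_uniq _ (relpre key (fun a b => b < a))).
- by move=> y x z /= lt_yx lt_zy; apply: ltn_trans lt_zy lt_yx.
- by move=> x /=; rewrite ltnn.
by apply: sub_sorted desc_s => x y /andP[].
Qed.

Lemma key_descent_dm s : key_descent s -> dm_path G2 s.
Proof.
move=> desc_s; rewrite /dm_path key_descent_uniq //=; apply/andP; split.
  by case: s desc_s => // x s; apply: sub_path => y z /andP[].
rewrite sorted_map; apply: sub_sorted desc_s => x y /andP[/gdeg_key le_yx _] /=.
by move: (gdeg_colourD x) (gdeg_colourD y); lia.
Qed.

Definition level (v : 'I_n) : nat :=
  longest (fun s => key_descent s && (ohead s == Some v)).

Lemma leq_level v s : key_descent s -> ohead s = Some v -> size s <= level v.
Proof.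
move=> desc_s head_s; apply: leq_longest (key_descent_uniq desc_s).
by rewrite desc_s head_s /=.
Qed.

Lemma level_gt0 v : 0 < level v.
Proof. exact: (@leq_level v [:: v]). Qed.

Lemma level_witness v :
  exists2 s, key_descent s & (ohead s = Some v) /\ size s = level v.
Proof.
have [||s /andP[desc_s /eqP head_s] size_s] :=
  @longest_witness _ (fun s => key_descent s && (ohead s == Some v)) [:: v].
- by rewrite /= eqxx.
- by [].
- by exists s.
Qed.

Lemma level_ltm v : level v < m.
Proof.
have [s /key_descent_dm/dm_path_leq_mp le_mp [_ <-]] := level_witness v.
exact: leq_ltn_trans le_mp mp_G2_ltm.
Qed.

Lemma level_G2 u v : key u < key v -> G2 v u -> level u < level v.
Proof.
move=> lt_uv vu; have [s desc_s [head_s <-]] := level_witness u.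
case: s head_s desc_s => [|x s] //= [->] desc_s.
by apply: (@leq_level v [:: v, u & s]) => //=; rewrite lt_uv vu.
Qed.

Lemma G1_level u v : key u < key v -> level v <= level u -> G1 u v.
Proof.
move=> lt_uv le_vu.
have neq_uv : u != v by apply: contraTneq lt_uv => ->; rewrite ltnn.
rewrite colour_graph_trueN //; apply: contraTN le_vu => uv.
by rewrite -ltnNge level_G2 // colour_graph_sym.
Qed.

Lemma G1_same_level u v : u != v -> level u = level v -> G1 u v.
Proof.
move=> neq_uv eq_uv; have [lt_uv|lt_vu|/key_inj eq] := ltngtP (key u) (key v).
- by rewrite G1_level ?eq_uv.
- by rewrite colour_graph_sym G1_level ?eq_uv.
- by rewrite eq eqxx in neq_uv.
Qed.

Hypothesis m_ge3 : 3 <= m.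
Hypothesis n_ge : 2 * (m - 1) <= n.

Lemma card_level k : 0 < k < m -> #|[set x | level x == k]| = 2.
Proof.
move=> /andP[k_gt0 k_ltm].
have lvl_ord v : (level v).-1 < m.-1 by have := level_gt0 v; have := level_ltm v; lia.
pose f v := Ordinal (lvl_ord v).
have fE v (j : 'I_m.-1) : (f v == j) = (level v == j.+1).
  by rewrite -val_eqE /=; have := level_gt0 v; move: (level v) => l; case: l.
have k_ord : k.-1 < m.-1 by lia.
have -> : [set x | level x == k] = [set x | f x == Ordinal k_ord].
  by apply/setP => x; rewrite !inE fE /= prednK.
apply: card_fibers_eq => [j|]; last by rewrite card_ord; lia.
rewrite leqNgt; apply/card_gt2P => -[x [y [z [[]]]]].
rewrite !inE !fE => /eqP lx /eqP ly /eqP lz [neq_xy neq_yz neq_zx].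
apply: (@G1_triangle_free x y z); apply: G1_same_level => //; congruence.
Qed.

Definition partner (v : 'I_n) : 'I_n :=
  odflt v [pick w | (w != v) && (level w == level v)].

Lemma partnerP v : partner v != v /\ level (partner v) = level v.
Proof.
rewrite /partner; case: pickP => [w /andP[? /eqP ?] //|no_partner].
have := cardsD1 v [set x | level x == level v].
rewrite card_level ?level_gt0 ?level_ltm // inE eqxx => card_v.
have /card_gt0P[w] : 0 < #|[set x | level x == level v] :\ v|.
  by move: card_v; rewrite add1n => -[<-].
by rewrite !inE no_partner.
Qed.

Lemma G1_partner v : G1 v (partner v).
Proof. by have [? ?] := partnerP v; apply: G1_same_level; rewrite // eq_sym. Qed.

Lemma gdeg_gt0 v : 0 < d1 v.
Proof. by apply/card_gt0P; exists (partner v); rewrite inE G1_partner. Qed.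

Lemma gdeg_le1_neighbour x u w : d1 x <= 1 -> G1 x u -> G1 x w -> u = w.
Proof. by move=> /card_le1_eqP le1 xu xw; apply: le1; rewrite inE. Qed.

(* The neighbours of q lie in B, level is injective on B, and partner maps B
   into the neighbourhood of the key-maximal r in B; hence
   d1 q <= #|B| <= d1 r <= d1 q, and G1_eq_gdeg applies to the edge r q. *)
Section LevelStep.
Variable J : nat.
Hypothesis gdeg_below : forall u, level u < J -> d1 u <= 1.
Variables p q : 'I_n.
Hypotheses (level_p : level p = J) (level_q : level q = J) (lt_pq : key p < key q).

Let B := [set u | (key u < key q) && (J <= level u)].

Lemma key_B_lt u : u \in B -> key u < key q.
Proof. by rewrite inE => /andP[]. Qed.

Lemma G1_B_q u : u \in B -> G1 u q.
Proof. by rewrite inE => /andP[lt_uq le_J]; apply: G1_level; rewrite ?level_q. Qed.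

Lemma p_in_B : p \in B.
Proof. by rewrite inE lt_pq level_p leqnn. Qed.

Lemma neighbours_q_sub_B : [set u | G1 q u] \subset B.
Proof.
apply/subsetP => u; rewrite !inE => qu; apply/andP; split.
  have [//|lt_qu|/key_inj eq_uq] := ltngtP (key u) (key q).
    by case: (G1_no_key_path (G1_B_q p_in_B) qu lt_pq lt_qu).
  by move: (colour_graph_neq qu); rewrite eq_uq eqxx.
rewrite leqNgt; apply/negP => lt_uJ.
rewrite colour_graph_sym in qu.
have eq_q := gdeg_le1_neighbour (gdeg_below lt_uJ) (G1_partner u) qu.
by move: lt_uJ; rewrite -level_q -eq_q (partnerP u).2 ltnn.
Qed.

Lemma level_inj_B : {in B &, injective level}.
Proof.
move=> b1 b2 b1_B b2_B eq_b; apply/eqP/negPn/negP => neq_b.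
have b1b2 := G1_same_level neq_b eq_b.
have [lt_b|lt_b|/key_inj eq] := ltngtP (key b1) (key b2).
- exact: G1_no_key_path b1b2 (G1_B_q b2_B) lt_b (key_B_lt b2_B).
- rewrite colour_graph_sym in b1b2.
  exact: G1_no_key_path b1b2 (G1_B_q b1_B) lt_b (key_B_lt b1_B).
- by rewrite eq eqxx in neq_b.
Qed.

Section Maximum.
Variable r : 'I_n.
Hypotheses (r_in_B : r \in B) (r_max : forall b, b \in B -> key b <= key r).

Lemma level_le_max b : b \in B -> level b <= level r.
Proof.
move=> b_B; have [->//|neq_br] := eqVneq b r.
have lt_br : key b < key r.
  by rewrite ltn_neqAle r_max // andbT; apply: contra neq_br => /eqP/key_inj ->.
rewrite leqNgt; apply/negP => lt_rb.
have br := G1_level lt_br (ltnW lt_rb).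
exact: G1_no_key_path br (G1_B_q r_in_B) lt_br (key_B_lt r_in_B).
Qed.

Lemma partner_B_sub : partner @: B \subset [set u | G1 r u].
Proof.
apply/subsetP => _ /imsetP[b b_B ->]; rewrite inE.
have [neq_b level_b] := partnerP b.
have partner_notin_B : partner b \notin B.
  by apply: contra neq_b => pb_B; rewrite (level_inj_B pb_B b_B level_b).
have lt_r : key r < key (partner b).
  have Jb : J <= level b by move: b_B; rewrite inE => /andP[].
  move: partner_notin_B; rewrite inE level_b Jb andbT -leqNgt.
  exact: leq_trans (key_B_lt r_in_B).
by apply: (G1_level lt_r); rewrite level_b level_le_max.
Qed.

End Maximum.

Lemma gdeg_level_step : d1 q <= 1.
Proof.
have [r r_B r_max] := arg_maxnP key p_in_B.
have le_q_B : d1 q <= #|B| := subset_leq_card neighbours_q_sub_B.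
have le_B_r : #|B| <= d1 r.
  rewrite -(card_in_imset (f := partner)).
    exact: subset_leq_card (partner_B_sub r_B r_max).
  move=> b1 b2 b1_B b2_B eq_p; apply: level_inj_B => //.
  by rewrite -(partnerP b1).2 eq_p (partnerP b2).2.
apply: (G1_eq_gdeg (G1_B_q r_B)); apply/eqP.
rewrite eqn_leq (gdeg_key (key_B_lt r_B)) /=.
exact: leq_trans le_q_B le_B_r.
Qed.

End LevelStep.

Lemma gdeg_le1 v : d1 v <= 1.
Proof.
move: {2}(level v).+1 (ltnSn (level v)) => J; elim: J v => // J IH v.
rewrite ltnS leq_eqVlt => /predU1P[level_v|]; last exact: IH.
have [neq_v level_pv] := partnerP v.
have [lt|lt|/key_inj eq] := ltngtP (key v) (key (partner v)).
- apply: leq_trans (gdeg_key lt) _.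
  by apply: (gdeg_level_step IH (p := v)); rewrite ?level_pv.
- by apply: (gdeg_level_step IH (p := partner v)); rewrite ?level_pv.
- by rewrite -eq eqxx in neq_v.
Qed.

Lemma level_descent x s y : key_descent (x :: s) -> y \in s -> level y < level x.
Proof.
elim: s x => // z s IH x /andP[/andP[lt_zx xz] desc_s].
have lt_level := level_G2 lt_zx xz.
by rewrite inE => /predU1P[->//|/(IH z desc_s)/ltn_trans]; apply.
Qed.

Lemma gdeg_G2_eq x y : d2 x = d2 y.
Proof.
have := gdeg_le1 x; have := gdeg_le1 y; have := gdeg_gt0 x; have := gdeg_gt0 y.
by move: (gdeg_colourD x) (gdeg_colourD y); lia.
Qed.

Lemma G2_partner u v : u != v -> u != partner v -> G2 u (partner v).
Proof.
move=> neq_uv neq_up; rewrite -[G2 _ _]negbK -colour_graph_trueN //.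
apply: contra neq_uv => up; apply/eqP; apply: (gdeg_le1_neighbour (gdeg_le1 (partner v))).
- by rewrite colour_graph_sym.
- by rewrite colour_graph_sym G1_partner.
Qed.

Lemma colouring_contra : False.
Proof.
have [v level_v] : exists v, level v = m.-1.
  have /card_gt0P[v] : 0 < #|[set x | level x == m.-1]| by rewrite card_level //; lia.
  by rewrite inE => /eqP; exists v.
have [t desc_t [head_t size_t]] := level_witness v.
case: t head_t desc_t size_t => [|x [|y s]] // [->] desc size_s.
  by move: size_s; rewrite level_v /=; lia.
have [neq_pv level_pv] := partnerP v.
have /andP[v_ys _] := key_descent_uniq desc.
have partner_ys : partner v \notin y :: s.
  by apply/negP => /(level_descent desc); rewrite level_pv ltnn.
have last_ys : last y s \in y :: s := mem_last y s.
have uniq_t : uniq (rcons [:: v, y & s] (partner v)).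
  by rewrite rcons_uniq (key_descent_uniq desc) andbT in_cons negb_or neq_pv.
have dm : dm_path G2 (rcons [:: v, y & s] (partner v)).
  apply/and3P; split => //.
  - rewrite /= rcons_path; have /and3P[_ /= /andP[-> ->] _] := key_descent_dm desc.
    by apply: G2_partner; [apply: contraNneq v_ys | apply: contraNneq partner_ys] => <-.
  - rewrite sorted_map; apply: pairwise_sorted.
    have : pairwise [rel a b | a != b] (rcons [:: v, y & s] (partner v)).
      by rewrite -uniq_pairwise.
    by apply: sub_pairwise => a b _ /=; rewrite (gdeg_G2_eq a b).
have := dm_path_leq_mp dm; rewrite size_rcons size_s level_v.
by move: mp_G2_ltm; lia.
Qed.

End UpperBound.

Lemma ramsey_mp_prop_mono m1 m2 M M' :
  M <= M' -> ramsey_mp_prop m1 m2 M -> ramsey_mp_prop m1 m2 M'.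
Proof. by move=> le_M prop n le_n; apply: prop; apply: leq_trans le_n. Qed.

Lemma ramsey_mp_upper m : 3 <= m -> ramsey_mp_prop 3 m (2 * (m - 1)).
Proof.
move=> m_ge3 n n_ge c c_sym.
have [|mp1] := leqP 3 (mp (colour_graph c true)); first by left.
have [|mp2] := leqP m (mp (colour_graph c false)); first by right.
by case: (colouring_contra c_sym mp1 mp2 m_ge3 n_ge).
Qed.

Lemma ramsey_mp_lower m : 3 <= m -> ~ ramsey_mp_prop 3 m (2 * m - 3).
Proof.
move=> m_ge3 prop.
have [|c [c_sym mp1 mp2]] := @cut_colouring_mp_bounds (m - 2) (m - 1); first by lia.
have le_n : 2 * m - 3 <= (m - 2) + (m - 1) by lia.
have [] := prop _ le_n c c_sym; lia.
Qed.

Theorem theorem1p4 (m : nat) : 3 <= m -> is_M 3 m (2 * (m - 1)).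
Proof.
move=> m_ge3; split=> [|M prop]; first exact: ramsey_mp_upper.
rewrite leqNgt; apply/negP => lt_M.
by apply: (ramsey_mp_lower m_ge3); apply: ramsey_mp_prop_mono prop; lia.
Qed.
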